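(* (1) Let $\mathcal X\subseteq\mathcal C$ be a covariantly finite subcategory closed under extensions and direct summands, and put $\mathcal Y={}^{\perp_1}\mathcal X$. Then for every $C\in\mathcal C$ there is an $\mathbb E$-triangle $X\xrightarrow{x}Y\xrightarrow{y}C\overset{\delta}{\dashrightarrow}$ with $X\in\mathcal X$, $Y\in\mathcal Y$, and $y:Y\to C$ a right $\mathcal Y$-approximation of $C$. (2) Let $\mathcal Y\subseteq\mathcal C$ be a contravariantly finite subcategory closed under extensions and direct summands, and put $\mathcal X=\mathcal Y^{\perp_1}$. Then for every $C\in\mathcal C$ there is an $\mathbb E$-triangle $C\xrightarrow{x}X\xrightarrow{y}Y\overset{\delta}{\dashrightarrow}$ with $X\in\mathcal X$, $Y\in\mathcal Y$, and $x:C\to X$ a left $\mathcal X$-approximation of $C$.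
   Context: $(\mathcal C,\mathbb E,\mathfrak s)$ is an extriangulated category in the sense of Nakaoka–Palu, whose underlying additive category is Krull–Schmidt, and which has enough projectives and enough injectives (projective $P$: $\mathbb E(P,-)=0$; injective $I$: $\mathbb E(-,I)=0$). All subcategories are full additive subcategories closed under isomorphisms. A subcategory is closed under extensions if for every $\mathbb E$-triangle $A\to B\to C\dashrightarrow$ with $A,C$ in it, $B$ is in it. For a subcategory $\mathcal X$, ${}^{\perp_1}\mathcal X=\{Y\in\mathcal C:\mathbb E(Y,X)=0\ \forall X\in\mathcal X\}$ and $\mathcal X^{\perp_1}=\{Y\in\mathcal C:\mathbb E(X,Y)=0\ \forall X\in\mathcal X\}$. *)

From HB Require Import structures.
From mathcomp Require Import all_boot all_algebra.
Set Implicit Arguments.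
Unset Strict Implicit.
Unset Printing Implicit Defensive.
Import GRing.Theory.
Local Open Scope ring_scope.

Record PreAdd := {
  Ob :> Type;
  Mor : Ob -> Ob -> zmodType;
  comp : forall {A B C : Ob}, Mor B C -> Mor A B -> Mor A C;
  idm : forall (A : Ob), Mor A A;
  comp_assoc : forall (A B C D : Ob) (h : Mor C D) (g : Mor B C) (f : Mor A B),
      comp h (comp g f) = comp (comp h g) f;
  comp_id_l : forall (A B : Ob) (f : Mor A B), comp (idm B) f = f;
  comp_id_r : forall (A B : Ob) (f : Mor A B), comp f (idm A) = f;
  comp_addl : forall (A B C : Ob) (g1 g2 : Mor B C) (f : Mor A B),
      comp (g1 + g2) f = comp g1 f + comp g2 f;
  comp_addr : forall (A B C : Ob) (g : Mor B C) (f1 f2 : Mor A B),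
      comp g (f1 + f2) = comp g f1 + comp g f2
}.
Arguments comp {p A B C}.
Arguments idm {p}.

Section Basic.
Variable C : PreAdd.

Definition isIso (A B : C) (f : Mor A B) : Prop :=
  exists g : Mor B A, comp g f = idm A /\ comp f g = idm B.

Definition isZeroObj (Z : C) : Prop := idm Z = 0.

Definition isBiprod (A1 A2 S : C) (i1 : Mor A1 S) (i2 : Mor A2 S)
    (p1 : Mor S A1) (p2 : Mor S A2) : Prop :=
  [/\ comp p1 i1 = idm A1, comp p2 i2 = idm A2, comp p1 i2 = 0,
      comp p2 i1 = 0 & comp i1 p1 + comp i2 p2 = idm S].

Definition additive : Prop :=
  (exists Z : C, isZeroObj Z) /\
  (forall A1 A2 : C, exists (S : C) (i1 : Mor A1 S) (i2 : Mor A2 S)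
      (p1 : Mor S A1) (p2 : Mor S A2), isBiprod i1 i2 p1 p2).

Definition localEnd (A : C) : Prop :=
  idm A <> 0 /\ forall f : Mor A A, isIso f \/ isIso (idm A - f).

Definition KrullSchmidt : Prop :=
  forall A : C, exists (n : nat) (L : 'I_n -> C)
    (i : forall k, Mor (L k) A) (p : forall k, Mor A (L k)),
    [/\ forall k, localEnd (L k),
        forall k, comp (p k) (i k) = idm (L k),
        forall j k, j != k -> comp (p j) (i k) = 0
      & \sum_(k < n) comp (i k) (p k) = idm A].
End Basic.

(* Extriangulated categories.  E C A is the group E(C,A);
   pushE a = a_* (covariant in A), pullE c = c^* (contravariant in C).
   real d x y  means  s(d) = [A --x--> B --y--> C]. *)
Record ExtriCat := {
  cat :> PreAdd;
  cat_additive : additive cat;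
  E : cat -> cat -> zmodType;
  pushE : forall {A A' Cc : cat}, Mor A A' -> E Cc A -> E Cc A';
  pullE : forall {A Cc Cc' : cat}, Mor Cc' Cc -> E Cc A -> E Cc' A;
  pushE_add : forall (A A' Cc : cat) (a : Mor A A') (d1 d2 : E Cc A),
      pushE a (d1 + d2) = pushE a d1 + pushE a d2;
  pushE_addm : forall (A A' Cc : cat) (a1 a2 : Mor A A') (d : E Cc A),
      pushE (a1 + a2) d = pushE a1 d + pushE a2 d;
  pushE_id : forall (A Cc : cat) (d : E Cc A), pushE (idm A) d = d;
  pushE_comp : forall (A A' A'' Cc : cat) (b : Mor A' A'') (a : Mor A A')
      (d : E Cc A), pushE (comp b a) d = pushE b (pushE a d);
  pullE_add : forall (A Cc Cc' : cat) (c : Mor Cc' Cc) (d1 d2 : E Cc A),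
      pullE c (d1 + d2) = pullE c d1 + pullE c d2;
  pullE_addm : forall (A Cc Cc' : cat) (c1 c2 : Mor Cc' Cc) (d : E Cc A),
      pullE (c1 + c2) d = pullE c1 d + pullE c2 d;
  pullE_id : forall (A Cc : cat) (d : E Cc A), pullE (idm Cc) d = d;
  pullE_comp : forall (A Cc Cc' Cc'' : cat) (c : Mor Cc' Cc) (c' : Mor Cc'' Cc')
      (d : E Cc A), pullE (comp c c') d = pullE c' (pullE c d);
  push_pullE : forall (A A' Cc Cc' : cat) (a : Mor A A') (c : Mor Cc' Cc)
      (d : E Cc A), pushE a (pullE c d) = pullE c (pushE a d);
  real : forall {A B Cc : cat}, E Cc A -> Mor A B -> Mor B Cc -> Prop;
  real_ex : forall (A Cc : cat) (d : E Cc A),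
      exists (B : cat) (x : Mor A B) (y : Mor B Cc), real d x y;
  (* s(d) is exactly one equivalence class of sequences *)
  real_equiv : forall (A B B' Cc : cat) (d : E Cc A)
      (x : Mor A B) (y : Mor B Cc) (x' : Mor A B') (y' : Mor B' Cc),
      real d x y ->
      (real d x' y' <->
       exists b : Mor B B', isIso b /\ comp b x = x' /\ comp y' b = y);
  real_morph : forall (A B Cc A' B' Cc' : cat) (d : E Cc A) (d' : E Cc' A')
      (x : Mor A B) (y : Mor B Cc) (x' : Mor A' B') (y' : Mor B' Cc')
      (a : Mor A A') (c : Mor Cc Cc'),
      real d x y -> real d' x' y' -> pushE a d = pullE c d' ->
      exists b : Mor B B', comp b x = comp x' a /\ comp y' b = comp c y;
  real_zero : forall (A Cc S : cat) (i1 : Mor A S) (i2 : Mor Cc S)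
      (p1 : Mor S A) (p2 : Mor S Cc),
      isBiprod i1 i2 p1 p2 -> real (0 : E Cc A) i1 p2;
  real_sum : forall (A A' B B' Cc Cc' SA SB SC : cat)
      (iA : Mor A SA) (iA' : Mor A' SA) (pA : Mor SA A) (pA' : Mor SA A')
      (iB : Mor B SB) (iB' : Mor B' SB) (pB : Mor SB B) (pB' : Mor SB B')
      (iC : Mor Cc SC) (iC' : Mor Cc' SC) (pC : Mor SC Cc) (pC' : Mor SC Cc')
      (d : E Cc A) (d' : E Cc' A') (dd : E SC SA)
      (x : Mor A B) (y : Mor B Cc) (x' : Mor A' B') (y' : Mor B' Cc'),
      isBiprod iA iA' pA pA' -> isBiprod iB iB' pB pB' ->
      isBiprod iC iC' pC pC' ->
      pushE pA (pullE iC dd) = d -> pushE pA' (pullE iC' dd) = d' ->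
      pushE pA (pullE iC' dd) = 0 -> pushE pA' (pullE iC dd) = 0 ->
      real d x y -> real d' x' y' ->
      real dd (comp iB (comp x pA) + comp iB' (comp x' pA'))
              (comp iC (comp y pB) + comp iC' (comp y' pB'));
  ET3 : forall (A B Cc A' B' Cc' : cat) (d : E Cc A) (d' : E Cc' A')
      (x : Mor A B) (y : Mor B Cc) (x' : Mor A' B') (y' : Mor B' Cc')
      (a : Mor A A') (b : Mor B B'),
      real d x y -> real d' x' y' -> comp b x = comp x' a ->
      exists c : Mor Cc Cc', comp c y = comp y' b /\ pushE a d = pullE c d';
  ET3op : forall (A B Cc A' B' Cc' : cat) (d : E Cc A) (d' : E Cc' A')
      (x : Mor A B) (y : Mor B Cc) (x' : Mor A' B') (y' : Mor B' Cc')
      (b : Mor B B') (c : Mor Cc Cc'),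
      real d x y -> real d' x' y' -> comp y' b = comp c y ->
      exists a : Mor A A', comp b x = comp x' a /\ pushE a d = pullE c d';
  ET4 : forall (A B Cc D F : cat) (d : E D A) (d' : E F B)
      (f : Mor A B) (f' : Mor B D) (g : Mor B Cc) (g' : Mor Cc F),
      real d f f' -> real d' g g' ->
      exists (Ee : cat) (d'' : E Ee A) (h : Mor A Cc) (h' : Mor Cc Ee)
             (dm : Mor D Ee) (e : Mor Ee F),
        [/\ real d'' h h',
            h = comp g f /\ comp h' g = comp dm f' /\ comp e h' = g',
            real (pushE f' d') dm e,
            pullE dm d'' = d
          & pushE f d'' = pullE e d'];
  ET4op : forall (A B D Ee F : cat) (d : E A D) (d' : E B F)
      (f' : Mor D B) (f : Mor B A) (g' : Mor F Ee) (g : Mor Ee B),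
      real d f' f -> real d' g' g ->
      exists (Cc : cat) (d'' : E A Cc) (h' : Mor Cc Ee) (h : Mor Ee A)
             (e : Mor F Cc) (dm : Mor Cc D),
        [/\ real d'' h' h,
            h = comp f g /\ comp g h' = comp f' dm /\ comp h' e = g',
            real (pullE f' d') e dm,
            pushE dm d'' = d
          & pullE f d'' = pushE e d']
}.
Arguments pushE {e A A' Cc}.
Arguments pullE {e A Cc Cc'}.
Arguments real {e A B Cc}.

Section Sub.
Variable C : ExtriCat.

Definition projective (P : C) : Prop := forall (A : C) (d : E P A), d = 0.
Definition injective (I : C) : Prop := forall (Cc : C) (d : E Cc I), d = 0.

Definition enough_projectives : Prop :=
  forall Cc : C, exists (A P : C) (d : E Cc A) (x : Mor A P) (y : Mor P Cc),
    real d x y /\ projective P.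
Definition enough_injectives : Prop :=
  forall A : C, exists (I Cc : C) (d : E Cc A) (x : Mor A I) (y : Mor I Cc),
    real d x y /\ injective I.

(* a subcategory is given by its (full) class of objects *)
Definition iso_closed (X : C -> Prop) : Prop :=
  forall (A B : C) (f : Mor A B), isIso f -> X A -> X B.

Definition subcategory (X : C -> Prop) : Prop :=
  [/\ iso_closed X, exists Z : C, isZeroObj Z /\ X Z &
      forall (A1 A2 S : C) (i1 : Mor A1 S) (i2 : Mor A2 S)
        (p1 : Mor S A1) (p2 : Mor S A2),
        isBiprod i1 i2 p1 p2 -> X A1 -> X A2 -> X S].

Definition ext_closed (X : C -> Prop) : Prop :=
  forall (A B Cc : C) (d : E Cc A) (x : Mor A B) (y : Mor B Cc),
    real d x y -> X A -> X Cc -> X B.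

Definition summand_closed (X : C -> Prop) : Prop :=
  forall (A1 A2 S : C) (i1 : Mor A1 S) (i2 : Mor A2 S)
    (p1 : Mor S A1) (p2 : Mor S A2),
    isBiprod i1 i2 p1 p2 -> X S -> X A1 /\ X A2.

Definition left_approx (X : C -> Prop) (A X0 : C) (f : Mor A X0) : Prop :=
  X X0 /\ forall (X1 : C) (g : Mor A X1), X X1 ->
    exists h : Mor X0 X1, comp h f = g.
Definition right_approx (X : C -> Prop) (A X0 : C) (f : Mor X0 A) : Prop :=
  X X0 /\ forall (X1 : C) (g : Mor X1 A), X X1 ->
    exists h : Mor X1 X0, comp f h = g.

Definition covariantly_finite (X : C -> Prop) : Prop :=
  forall A : C, exists (X0 : C) (f : Mor A X0), left_approx X f.
Definition contravariantly_finite (X : C -> Prop) : Prop :=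
  forall A : C, exists (X0 : C) (f : Mor X0 A), right_approx X f.

Definition perpL (X : C -> Prop) (Y : C) : Prop :=
  forall (X0 : C) (d : E Y X0), X X0 -> d = 0.
Definition perpR (X : C -> Prop) (Y : C) : Prop :=
  forall (X0 : C) (d : E X0 Y), X X0 -> d = 0.
End Sub.

(* Part (1): take a conflation A -> P -> C with P projective and a left minimal
   X-approximation a : A -> X0, and push it out along a to get X0 -> Y0 -> C.
   Every g : Y' -> C with Y' in ^{perp_1}X lifts to Y0, since g^* a_* delta lies
   in E(Y', X0) = 0.  That Y0 itself lies in ^{perp_1}X is Wakamatsu's lemma:
   for e in E(Y0, X') the class x^* e is realised by X' -> W -> X0 with W in X,
   a factors through W, so left minimality of a splits this conflation; then
   exactness of the long E-sequences of both conflations forces e = 0.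
   Part (2) is dual, with an injective and a right minimal approximation.

   Minimal approximations exist since X0 is a finite sum of objects with local
   endomorphism rings.  Componentwise non-invertible endomorphisms psi have
   1 - psi invertible (induction on the number of summands via Schur
   complements), so if phi a = a with phi not invertible, some component of
   1 - phi is invertible and the corresponding summand of X0 can be discarded
   without losing the approximation property. *)

From HB Require Import structures.
From Pilot Require Import Defs.
From mathcomp Require Import all_boot all_algebra.
From Stdlib Require Import Classical.
Set Implicit Arguments.
Unset Strict Implicit.
Unset Printing Implicit Defensive.
Import GRing.Theory.
Local Open Scope ring_scope.

Notation "g ** f" := (Defs.comp g f) (at level 40, left associativity).

Section Preadditive.
Variable C : PreAdd.
Implicit Types A B D : C.

Lemma comp0l A B D (f : Mor A B) : (0 : Mor B D) ** f = 0.
Proof. by apply: (addrI ((0 : Mor B D) ** f)); rewrite -comp_addl !addr0. Qed.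

Lemma comp0r A B D (g : Mor B D) : g ** (0 : Mor A B) = 0.
Proof. by apply: (addrI (g ** (0 : Mor A B))); rewrite -comp_addr !addr0. Qed.

Lemma compNl A B D (g : Mor B D) (f : Mor A B) : (- g) ** f = - (g ** f).
Proof. by apply/eqP; rewrite -subr_eq0 opprK -comp_addl addNr comp0l. Qed.

Lemma compNr A B D (g : Mor B D) (f : Mor A B) : g ** (- f) = - (g ** f).
Proof. by apply/eqP; rewrite -subr_eq0 opprK -comp_addr addNr comp0r. Qed.

Lemma compBl A B D (g1 g2 : Mor B D) (f : Mor A B) :
  (g1 - g2) ** f = g1 ** f - g2 ** f.
Proof. by rewrite comp_addl compNl. Qed.

Lemma compBr A B D (g : Mor B D) (f1 f2 : Mor A B) :
  g ** (f1 - f2) = g ** f1 - g ** f2.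
Proof. by rewrite comp_addr compNr. Qed.

Lemma comp_suml A B D (I : Type) (r : seq I) (P : pred I) (G : I -> Mor B D)
    (f : Mor A B) :
  (\sum_(i <- r | P i) G i) ** f = \sum_(i <- r | P i) (G i ** f).
Proof. by apply: (big_morph (fun g => g ** f)) => [g h|]; rewrite ?comp_addl ?comp0l. Qed.

Lemma comp_sumr A B D (I : Type) (r : seq I) (P : pred I) (g : Mor B D)
    (F : I -> Mor A B) :
  g ** (\sum_(i <- r | P i) F i) = \sum_(i <- r | P i) (g ** F i).
Proof. by apply: (big_morph (fun f => g ** f)) => [f h|]; rewrite ?comp_addr ?comp0r. Qed.

End Preadditive.

Definition endo (C : PreAdd) (X : C) : Type := Mor X X.
HB.instance Definition _ (C : PreAdd) (X : C) := GRing.Zmodule.on (endo X).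
HB.instance Definition _ (C : PreAdd) (X : C) :=
  GRing.Zmodule_isPzRing.Build (endo X) (@comp_assoc C X X X X)
    (@comp_id_l C X X) (@comp_id_r C X X) (@comp_addl C X X X) (@comp_addr C X X X).

Section LocalObjects.
Variable C : PreAdd.
Implicit Types L : C.

Lemma local_idem L (t : Mor L L) : localEnd L -> t ** t = t -> t = idm L \/ t = 0.
Proof.
move=> [_ hL] tt; case: (hL t) => [[v [vt _]]|[v [vt _]]].
- by left; rewrite -[t]comp_id_l -vt -comp_assoc tt.
- right; have t1t : (idm L - t) ** t = 0 by rewrite compBl tt comp_id_l subrr.
  by rewrite -[t]comp_id_l -vt -comp_assoc t1t comp0r.
Qed.

Lemma local_retraction_iso L L' (g : Mor L L') (h : Mor L' L) :
  localEnd L -> localEnd L' -> h ** g = idm L -> isIso g.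
Proof.
move=> [L0 _] hL' hg; exists h; split=> //.
have gh_idem : (g ** h) ** (g ** h) = g ** h.
  by rewrite -comp_assoc (comp_assoc h) hg comp_id_l.
case: (local_idem hL' gh_idem) => [//|gh0]; exfalso; apply: L0.
have g0 : g = 0 by rewrite -[g]comp_id_r -hg comp_assoc gh0 comp0l.
by rewrite -hg g0 comp0r.
Qed.

Lemma local_section_iso L L' (g : Mor L L') (s : Mor L' L) :
  localEnd L -> localEnd L' -> g ** s = idm L' -> isIso g.
Proof.
move=> hL hL' gs; have [s' [s's ss']] := local_retraction_iso hL' hL gs.
have -> : g = s' by rewrite -[g]comp_id_r -ss' comp_assoc gs comp_id_l.
by exists s.
Qed.

Lemma nonIso0 L L' : localEnd L -> ~ isIso (0 : Mor L L').
Proof. by move=> [L0 _] [v [v0 _]]; apply: L0; rewrite -v0 comp0r. Qed.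

Lemma nonIsoN L L' (g : Mor L L') : ~ isIso g -> ~ isIso (- g).
Proof.
move=> ng [v [vg gv]]; apply: ng; exists (- v).
by rewrite compNl -compNr vg compNr -compNl gv.
Qed.

Lemma nonIsoMl L L' L'' (h : Mor L' L'') (g : Mor L L') :
  localEnd L -> localEnd L' -> ~ isIso g -> ~ isIso (h ** g).
Proof.
move=> hL hL' ng [v [v_hg _]]; apply: ng.
by apply: (local_retraction_iso (h := v ** h)) => //; rewrite -comp_assoc.
Qed.

Lemma nonIsoMr L L' L'' (g : Mor L' L'') (h : Mor L L') :
  localEnd L' -> localEnd L'' -> ~ isIso g -> ~ isIso (g ** h).
Proof.
move=> hL' hL'' ng [v [_ gh_v]]; apply: ng.
by apply: (local_section_iso (s := h ** v)) => //; rewrite comp_assoc.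
Qed.

Lemma nonIsoD L L' (g1 g2 : Mor L L') : localEnd L -> localEnd L' ->
  ~ isIso g1 -> ~ isIso g2 -> ~ isIso (g1 + g2).
Proof.
move=> hL hL' n1 n2 [v [vg _]]; rewrite comp_addr in vg.
case: (hL.2 (v ** g1)) => [[w [wvg1 _]]|[w [wvg2 _]]].
- by apply: n1; apply: (local_retraction_iso (h := w ** v)); rewrite -?comp_assoc.
- have vg2 : idm L - v ** g1 = v ** g2 by rewrite -vg addrC addKr.
  apply: n2; apply: (local_retraction_iso (h := w ** v)) => //.
  by rewrite -comp_assoc -vg2.
Qed.

Lemma nonIso_sum L L' (I : Type) (r : seq I) (P : pred I) (G : I -> Mor L L') :
  localEnd L -> localEnd L' -> (forall i, P i -> ~ isIso (G i)) ->
  ~ isIso (\sum_(i <- r | P i) G i).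
Proof.
move=> hL hL' nG; apply: (big_ind (fun g : Mor L L' => ~ isIso g)) => //.
- exact: nonIso0.
- by move=> g h; apply: nonIsoD.
Qed.

End LocalObjects.

Section CornerSchur.
Variable R : pzRingType.

(* Block elimination with respect to u = e + f: z inverts the factorisation
   u x u = (u + c a') (a + S) (u + a' b), where a, b, c are the corners e x e,
   e x f, f x e, the corner a is inverted by a' and S is the Schur complement. *)
Lemma corner_schur_rinv (e f x a' s : R) :
  e * e = e -> f * f = f -> e * f = 0 -> f * e = 0 ->
  e * a' = a' -> a' * e = a' -> e * x * e * a' = e ->
  (f * x * f - f * x * e * a' * (e * x * f)) * s = f ->
  exists z, (e + f) * x * (e + f) * z = e + f.
Proof.
set u := e + f; set a := e * x * e; set b := e * x * f; set c := f * x * e.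
set d := f * x * f; set S := d - _.
move=> ee ff ef fe ea' a'e aa' ss.
have fa' : f * a' = 0 by rewrite -ea' mulrA fe mul0r.
have a'f : a' * f = 0 by rewrite -a'e -mulrA ef mulr0.
have xu : u * x * u = a + b + c + d.
  by rewrite /u !mulrDl !mulrDr !addrA.
have uu : u * u = u by rewrite /u mulrDl !mulrDr ee ef fe ff addr0 add0r.
have uc : u * c = c by rewrite /u /c mulrDl !mulrA ef ff !mul0r add0r.
have a'u : a' * u = a' by rewrite /u mulrDr a'e a'f addr0.
have a'c : a' * c = 0 by rewrite /c !mulrA a'f !mul0r.
have eb : e * b = b by rewrite /b !mulrA ee.
have ba' : b * a' = 0 by rewrite /b -mulrA fa' mulr0.
have da' : d * a' = 0 by rewrite /d -mulrA fa' mulr0.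
have Sf : S * f = S by rewrite /S /d /b mulrBl -!mulrA ff.
pose s' := f * s * f.
have as' : a * s' = 0 by rewrite /s' /a -!mulrA (mulrA e f) ef mul0r !mulr0.
have cs' : c * s' = 0 by rewrite /s' /c -!mulrA (mulrA e f) ef mul0r !mulr0.
have Ss' : S * s' = f by rewrite /s' !mulrA Sf ss ff.
have Sa' : S * a' = 0 by rewrite -Sf -mulrA fa' mulr0.
have Sdef : S = d - c * a' * b by [].
have udef : u = e + f by [].
clearbody u a b c d S s'.
have step1 : u * x * u * (u - a' * b) = a + c + S.
  rewrite mulrBr -(mulrA _ u u) uu xu !mulrDl !mulrA aa' eb ba' da' !mul0r !addr0.
  by rewrite Sdef opprD addrA (addrAC a b c) (addrAC (a + c) b d) addrK addrA.
have step2 : (a + c + S) * (a' + s') = u + c * a'.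
  by rewrite mulrDr !mulrDl aa' as' Sa' Ss' cs' !addr0 !add0r udef addrAC.
have step3 : (u + c * a') * (u - c * a') = u.
  have ca'ca' : c * a' * (c * a') = 0 by rewrite mulrA -(mulrA c) a'c mulr0 mul0r.
  by rewrite mulrDl !mulrBr uu mulrA uc -(mulrA c a' u) a'u ca'ca' subr0 subrK.
exists ((u - a' * b) * (a' + s') * (u - c * a')).
by rewrite 2!mulrA step1 step2 step3.
Qed.

Lemma corner_sub_rinv (e f psi a' s : R) :
  e * e = e -> f * f = f -> e * f = 0 -> f * e = 0 ->
  e * a' = a' -> a' * e = a' -> e * (1 - psi) * e * a' = e ->
  f * (1 - (psi + psi * a' * psi)) * f * s = f ->
  exists z, (e + f) * (1 - psi) * (e + f) * z = e + f.
Proof.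
move=> ee ff ef fe ea' a'e exea' hs; apply: (corner_schur_rinv ee ff ef fe ea' a'e exea').
have fxf : f * (1 - psi) * f = f - f * psi * f by rewrite mulrBr mulr1 mulrBl ff.
have fxe : f * (1 - psi) * e = - (f * psi * e) by rewrite mulrBr mulr1 mulrBl fe sub0r.
have exf : e * (1 - psi) * f = - (e * psi * f) by rewrite mulrBr mulr1 mulrBl ef sub0r.
have mid : f * psi * e * a' * (e * psi * f) = f * (psi * a' * psi) * f.
  by rewrite !mulrA -(mulrA (f * psi) e a') ea' -(mulrA (f * psi) a' e) a'e.
rewrite -[X in _ = X]hs fxf fxe exf mulrN !mulNr opprK mid; congr (_ * s).
by rewrite opprD addrA mulrBr mulrBl fxf.
Qed.

End CornerSchur.

Section Families.
Variable C : PreAdd.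

Definition local_family (X : C) n (L : 'I_n -> C) (i : forall k, Mor (L k) X)
    (p : forall k, Mor X (L k)) : Prop :=
  [/\ forall k, localEnd (L k), forall k, p k ** i k = idm (L k) &
      forall j k, j != k -> p j ** i k = 0].

Definition fam_idem (X : C) n (L : 'I_n -> C) (i : forall k, Mor (L k) X)
    (p : forall k, Mor X (L k)) : endo X :=
  \sum_(k < n) i k ** p k.

Definition radical (X : C) n (L : 'I_n -> C) (i : forall k, Mor (L k) X)
    (p : forall k, Mor X (L k)) (psi : Mor X X) : Prop :=
  forall j k, ~ isIso (p k ** psi ** i j).

Section OneFamily.
Variables (X : C) (n : nat) (L : 'I_n -> C).
Variables (i : forall k, Mor (L k) X) (p : forall k, Mor X (L k)).
Hypothesis hfam : local_family i p.

Lemma proj_fam_idem k : p k ** fam_idem i p = p k.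
Proof.
have [_ pi orth] := hfam.
rewrite /fam_idem comp_sumr (bigD1 k) //= comp_assoc pi comp_id_l big1 ?addr0 //.
by move=> j jk; rewrite comp_assoc orth ?comp0l // eq_sym.
Qed.

Lemma fam_idem_idem : fam_idem i p ** fam_idem i p = fam_idem i p.
Proof.
rewrite {1}/fam_idem comp_suml; apply: eq_bigr => k _.
by rewrite -comp_assoc proj_fam_idem.
Qed.

End OneFamily.

Lemma local_family_lift (X : C) n (L : 'I_n.+1 -> C) (i : forall k, Mor (L k) X)
    (p : forall k, Mor X (L k)) (j : 'I_n.+1) :
  local_family i p -> local_family (fun k => i (lift j k)) (fun k => p (lift j k)).
Proof.
move=> [loc pi orth]; split=> // k m km.
by apply: orth; rewrite (inj_eq (@lift_inj _ j)).
Qed.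

Lemma split_idem_corner_inv (X L : C) (s : Mor L X) (r : Mor X L) (psi : endo X)
    (w : Mor L L) :
  r ** s = idm L -> (idm L - r ** psi ** s) ** w = idm L ->
  [/\ (s ** r : endo X) * (s ** r) = s ** r,
      (s ** r : endo X) * (s ** w ** r) = s ** w ** r,
      (s ** w ** r : endo X) * (s ** r) = s ** w ** r
    & (s ** r : endo X) * (1 - psi) * (s ** r) * (s ** w ** r) = s ** r].
Proof.
move=> rs gw.
have ee : (s ** r : endo X) * (s ** r) = s ** r.
  by rewrite [_ * _]comp_assoc -(comp_assoc s r s) rs comp_id_r.
split=> //.
- by rewrite [_ * _]comp_assoc (comp_assoc _ s) -(comp_assoc s r s) rs comp_id_r.
- by rewrite [_ * _]comp_assoc -(comp_assoc _ r s) rs comp_id_r.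
have exe : (s ** r : endo X) * (1 - psi) * (s ** r) = s ** (idm L - r ** psi ** s) ** r.
  rewrite mulrBr mulr1 mulrBl ee compBr compBl comp_id_r; congr (_ - _).
  by change (s ** r ** psi ** (s ** r) = s ** (r ** psi ** s) ** r); rewrite !comp_assoc.
rewrite exe [_ * _]comp_assoc (comp_assoc _ s) -(comp_assoc _ r s) rs comp_id_r.
by rewrite -(comp_assoc s) gw comp_id_r.
Qed.

(* Stated in the corner ring cut out by fam_idem, so that the induction can run
   over subfamilies of the same object. *)
Lemma radical_corner_rinv n : forall (X : C) (L : 'I_n -> C)
    (i : forall k, Mor (L k) X) (p : forall k, Mor X (L k)),
  local_family i p -> forall psi : endo X, radical i p psi ->
  exists z : endo X, fam_idem i p * (1 - psi) * fam_idem i p * z = fam_idem i p.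
Proof.
elim: n => [|n IH] X L i p hfam psi hrad.
  by exists 0; rewrite mulr0 /fam_idem big_ord0.
have [loc pi orth] := hfam.
pose i' k := i (lift ord0 k); pose p' k := p (lift ord0 k).
have hfam' : local_family i' p' := local_family_lift ord0 hfam.
set e : endo X := i ord0 ** p ord0; set f := fam_idem i' p'.
have uef : fam_idem i p = e + f by rewrite /fam_idem big_ord_recl.
have ff : f * f = f := fam_idem_idem hfam'.
have ef : e * f = 0.
  rewrite /e -[_ * _]comp_assoc /f /fam_idem comp_sumr big1 ?comp0r // => k _.
  by rewrite comp_assoc orth ?comp0l // neq_lift.
have fe : f * e = 0.
  rewrite /e [_ * _]comp_assoc /f /fam_idem comp_suml big1 ?comp0l // => k _.
  by rewrite -comp_assoc orth ?comp0r // eq_sym neq_lift.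
case: ((loc ord0).2 (p ord0 ** psi ** i ord0)) => [/hrad //|[w [_ g_w]]].
pose a' : endo X := i ord0 ** w ** p ord0.
have [ee ea' a'e exea'] := split_idem_corner_inv (pi ord0) g_w.
pose psi2 : endo X := psi + psi * a' * psi.
have hrad2 : radical i' p' psi2.
  move=> j k.
  have -> : p' k ** psi2 ** i' j =
      p' k ** psi ** i' j + (p' k ** psi ** i ord0 ** w) ** (p ord0 ** psi ** i' j).
    by rewrite /psi2 comp_addr comp_addl !comp_assoc.
  apply: nonIsoD; [exact: loc | exact: loc | exact: hrad |].
  by apply: nonIsoMl; [exact: loc | exact: loc | exact: hrad].
have [s hs] := IH X _ i' p' hfam' psi2 hrad2.
have [z hz] := corner_sub_rinv ee ff ef fe ea' a'e exea' hs.
by exists z; rewrite uef.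
Qed.

Section TotalFamily.
Variables (X : C) (n : nat) (L : 'I_n -> C).
Variables (i : forall k, Mor (L k) X) (p : forall k, Mor X (L k)).
Hypotheses (hfam : local_family i p) (hone : fam_idem i p = 1).

Lemma radicalMr (psi z : endo X) : radical i p psi -> radical i p (psi * z).
Proof.
have [loc _ _] := hfam; move=> hrad j k.
have -> : p k ** (psi * z) ** i j =
    \sum_(m < n) (p k ** psi ** i m) ** (p m ** z ** i j).
  have -> : psi * z = psi * fam_idem i p * z by rewrite hone mulr1.
  rewrite mulr_sumr mulr_suml comp_sumr comp_suml; apply: eq_bigr => m _.
  by change (p k ** (psi ** (i m ** p m) ** z) ** i j =
    p k ** psi ** i m ** (p m ** z ** i j)); rewrite !comp_assoc.
by apply: nonIso_sum => // m _; apply: nonIsoMr.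
Qed.

Lemma radicalN (psi : endo X) : radical i p psi -> radical i p (- psi).
Proof. by move=> hrad j k; rewrite compNr compNl; apply/nonIsoN/hrad. Qed.

(* A right inverse z of 1 - psi is itself right invertible, as z = 1 + psi z
   with psi z radical. *)
Lemma radical_unit (psi : endo X) : radical i p psi -> isIso (idm X - psi).
Proof.
move=> hrad.
have [z hz] := radical_corner_rinv hfam hrad.
rewrite hone mul1r mulr1 in hz.
have [z' hz'] := radical_corner_rinv hfam (radicalN (radicalMr (z := z) hrad)).
rewrite hone mul1r mulr1 opprK in hz'.
have zE : 1 + psi * z = z by rewrite -hz mulrBl mul1r subrK.
rewrite zE in hz'.
have psiE : 1 - psi = z'.
  transitivity ((1 - psi) * (z * z')); first by rewrite hz' mulr1.
  by rewrite mulrA hz mul1r.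
change (isIso (1 - psi)); rewrite psiE in hz *.
by exists z; split; [exact: hz' | exact: hz].
Qed.

Lemma nonIso_component (phi : endo X) :
  ~ isIso phi -> exists j k, isIso (p k ** (idm X - phi) ** i j).
Proof.
move=> nphi; apply: NNPP => hnone; apply: nphi.
have hrad : radical i p (1 - phi) by move=> j k hiso; apply: hnone; exists j, k.
by have := radical_unit hrad; rewrite opprB addrC subrK.
Qed.

End TotalFamily.

End Families.

Section Biproducts.
Variable C : PreAdd.
Hypothesis hadd : Defs.additive C.

(* The Kronecker delta between the members of a family of objects. *)
Definition castm n (L : 'I_n -> C) (k m : 'I_n) : Mor (L k) (L m) :=
  match k =P m with
  | ReflectT e => eq_rect k (fun t => Mor (L k) (L t)) (idm (L k)) m e
  | ReflectF _ => 0
  end.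

Lemma castm_id n (L : 'I_n -> C) k : castm L k k = idm (L k).
Proof. by rewrite /castm; case: (k =P k) => [e|] //; rewrite (eq_axiomK e). Qed.

Lemma castm_neq n (L : 'I_n -> C) k m : k != m -> castm L k m = 0.
Proof. by rewrite /castm; case: (k =P m) => // ->; rewrite eqxx. Qed.

Definition biproduct_of n (L : 'I_n -> C) (S : C) (i : forall k, Mor (L k) S)
    (p : forall k, Mor S (L k)) : Prop :=
  [/\ forall k, p k ** i k = idm (L k), forall j k, j != k -> p j ** i k = 0
    & fam_idem i p = 1].

Lemma biproduct_of_cons n (L : 'I_n.+1 -> C) (S' : C)
    (i' : forall k, Mor (L (lift ord0 k)) S') (p' : forall k, Mor S' (L (lift ord0 k))) :
  biproduct_of i' p' ->
  exists (S : C) (i : forall k, Mor (L k) S) (p : forall k, Mor S (L k)),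
    biproduct_of i p.
Proof.
move=> [pi' orth' one'].
have [S [j1 [j2 [q1 [q2 [qj1 qj2 qj12 qj21 jq]]]]]] := hadd.2 (L ord0) S'.
pose i k := j1 ** castm L k ord0 +
  j2 ** \sum_(m < n) (i' m ** castm L k (lift ord0 m)).
pose p k := castm L ord0 k ** q1 +
  \sum_(m < n) (castm L (lift ord0 m) k ** p' m ** q2).
have i0 : i ord0 = j1.
  rewrite /i castm_id comp_id_r big1 ?comp0r ?addr0 // => m _.
  by rewrite castm_neq ?comp0r // neq_lift.
have p0 : p ord0 = q1.
  rewrite /p castm_id comp_id_l big1 ?addr0 // => m _.
  by rewrite castm_neq ?comp0l // eq_sym neq_lift.
have iS k : i (lift ord0 k) = j2 ** i' k.
  rewrite /i castm_neq ?comp0r ?add0r; last by rewrite eq_sym neq_lift.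
  rewrite (bigD1 k) //= castm_id comp_id_r big1 ?addr0 // => m mk.
  by rewrite castm_neq ?comp0r // (inj_eq (@lift_inj _ ord0)) eq_sym.
have pS k : p (lift ord0 k) = p' k ** q2.
  rewrite /p castm_neq ?comp0l ?add0r; last by rewrite neq_lift.
  rewrite (bigD1 k) //= castm_id comp_id_l big1 ?addr0 // => m mk.
  by rewrite castm_neq ?comp0l ?comp0r // (inj_eq (@lift_inj _ ord0)).
exists S, i, p; split.
- move=> k; case: (unliftP ord0 k) => [k' ->|->]; last by rewrite i0 p0 qj1.
  by rewrite iS pS -comp_assoc (comp_assoc q2) qj2 comp_id_l pi'.
- move=> j k; case: (unliftP ord0 j) => [j' ->|->]; case: (unliftP ord0 k) => [k' ->|->].
  + rewrite (inj_eq (@lift_inj _ ord0)) => jk.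
    by rewrite iS pS -comp_assoc (comp_assoc q2) qj2 comp_id_l orth'.
  + by rewrite i0 pS -comp_assoc qj21 comp0r.
  + by rewrite iS p0 comp_assoc qj12 comp0l.
  + by rewrite eqxx.
- rewrite /fam_idem big_ord_recl i0 p0 -[1]jq; congr (_ + _).
  transitivity (j2 ** fam_idem i' p' ** q2); last by rewrite one' comp_id_r.
  rewrite /fam_idem comp_sumr comp_suml; apply: eq_bigr => m _.
  by rewrite iS pS !comp_assoc.
Qed.

Lemma biproduct_of_exists n (L : 'I_n -> C) :
  exists (S : C) (i : forall k, Mor (L k) S) (p : forall k, Mor S (L k)),
    biproduct_of i p.
Proof.
elim: n L => [|n IH] L.
  have [[Z Z0] _] := hadd.
  by exists Z, (fun k => 0), (fun k => 0); split; [case | case | rewrite /fam_idem big_ord0].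
have [S' [i' [p' hS']]] := IH (fun k => L (lift ord0 k)).
exact: biproduct_of_cons hS'.
Qed.

Lemma split_summand (X : C) n (L : 'I_n.+1 -> C)
    (i : forall k, Mor (L k) X) (p : forall k, Mor X (L k)) (j : 'I_n.+1) :
  local_family i p -> fam_idem i p = 1 ->
  exists (X1 : C) (q : forall m : 'I_n, Mor (L (lift j m)) X1)
    (r : forall m : 'I_n, Mor X1 (L (lift j m))) (i1 : Mor X1 X) (p1 : Mor X X1),
    [/\ local_family q r, fam_idem q r = 1 & isBiprod i1 (i j) p1 (p j)].
Proof.
move=> [loc pi orth] one.
have [X1 [q [r [rq orthq oneq]]]] := biproduct_of_exists (fun m : 'I_n => L (lift j m)).
pose i1 := \sum_(m < n) i (lift j m) ** r m.
pose p1 := \sum_(m < n) q m ** p (lift j m).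
have p_i1 m : p (lift j m) ** i1 = r m.
  rewrite /i1 comp_sumr (bigD1 m) //= comp_assoc pi comp_id_l big1 ?addr0 // => m' m'm.
  by rewrite comp_assoc orth ?comp0l // (inj_eq (@lift_inj _ j)) eq_sym.
have r_p1 m : r m ** p1 = p (lift j m).
  rewrite /p1 comp_sumr (bigD1 m) //= comp_assoc rq comp_id_l big1 ?addr0 // => m' m'm.
  by rewrite comp_assoc orthq ?comp0l // eq_sym.
exists X1, q, r, i1, p1; split => //; split.
- rewrite /p1 comp_suml -[idm X1]oneq; apply: eq_bigr => m _; by rewrite -comp_assoc p_i1.
- exact: pi.
- rewrite /p1 comp_suml big1 // => m _; rewrite -comp_assoc orth ?comp0r //.
  by rewrite eq_sym neq_lift.
- by rewrite /i1 comp_sumr big1 // => m _; rewrite comp_assoc orth ?comp0l ?neq_lift.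
- rewrite -[idm X]one /fam_idem (bigD1_ord j) //= addrC; congr (_ + _).
  by rewrite /i1 comp_suml; apply: eq_bigr => m _; rewrite -comp_assoc r_p1.
Qed.

End Biproducts.

Lemma not_forall_implies (T : Type) (P Q : T -> Prop) :
  ~ (forall x, P x -> Q x) -> exists2 x, P x & ~ Q x.
Proof.
move=> nPQ; apply: NNPP => nex; apply: nPQ => x Px.
by apply: NNPP => nQ; apply: nex; exists x.
Qed.

Section MinimalApproximations.
Variable C : ExtriCat.
Variable X : C -> Prop.
Hypothesis hsum : summand_closed X.

Definition left_minimal (A X0 : C) (a : Mor A X0) : Prop :=
  forall phi : Mor X0 X0, phi ** a = a -> isIso phi.

Definition right_minimal (X0 B : C) (a : Mor X0 B) : Prop :=
  forall phi : Mor X0 X0, a ** phi = a -> isIso phi.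

Lemma left_approx_drop_summand (A X0 : C) n (L : 'I_n.+1 -> C)
    (i : forall k, Mor (L k) X0) (p : forall k, Mor X0 (L k))
    (a : Mor A X0) (phi : endo X0) :
  local_family i p -> fam_idem i p = 1 -> left_approx X a ->
  phi ** a = a -> ~ isIso phi ->
  exists (X1 : C) (L1 : 'I_n -> C) (q : forall m, Mor (L1 m) X1)
    (r : forall m, Mor X1 (L1 m)) (a1 : Mor A X1),
    [/\ local_family q r, fam_idem q r = 1 & left_approx X a1].
Proof.
move=> hfam one [XX0 a_univ] phia nphi.
have [j [k [w [w_c _]]]] := nonIso_component hfam one nphi.
(* e retracts X0 onto L j and kills a, so a factors through the complement. *)
pose e := w ** p k ** (idm X0 - phi).
have e_i : e ** i j = idm (L j) by rewrite /e -w_c !comp_assoc.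
have e_a : e ** a = 0.
  by rewrite /e -comp_assoc compBl comp_id_l phia subrr comp0r.
clearbody e.
have [X1 [q [r [i1 [p1 [hfam1 one1 hb]]]]]] := split_summand (cat_additive C) j hfam one.
have [_ _ _ _ ip] := hb.
have retr : (i1 - i j ** e ** i1) ** (p1 ** a) = a.
  have i1p1 : i1 ** p1 = idm X0 - i j ** p j by rewrite -ip addrK.
  rewrite comp_assoc compBl -(comp_assoc (i j ** e) i1 p1) i1p1 compBr comp_id_r.
  rewrite !comp_assoc -(comp_assoc (i j) e (i j)) e_i comp_id_r.
  by rewrite opprB -addrA addKr compBl comp_id_l -comp_assoc e_a comp0r subr0.
exists X1, _, q, r, (p1 ** a); split=> //; split; first exact: (hsum hb XX0).1.
move=> X' g XX'; have [h hg] := a_univ X' g XX'.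
by exists (h ** (i1 - i j ** e ** i1)); rewrite -comp_assoc retr.
Qed.

Lemma right_approx_drop_summand (X0 B : C) n (L : 'I_n.+1 -> C)
    (i : forall k, Mor (L k) X0) (p : forall k, Mor X0 (L k))
    (a : Mor X0 B) (phi : endo X0) :
  local_family i p -> fam_idem i p = 1 -> right_approx X a ->
  a ** phi = a -> ~ isIso phi ->
  exists (X1 : C) (L1 : 'I_n -> C) (q : forall m, Mor (L1 m) X1)
    (r : forall m, Mor X1 (L1 m)) (a1 : Mor X1 B),
    [/\ local_family q r, fam_idem q r = 1 & right_approx X a1].
Proof.
move=> hfam one [XX0 a_univ] aphi nphi.
have [j [k [w [_ c_w]]]] := nonIso_component hfam one nphi.
pose e := (idm X0 - phi) ** i j ** w.
have p_e : p k ** e = idm (L k) by rewrite /e -c_w !comp_assoc.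
have a_e : a ** e = 0.
  by rewrite /e !comp_assoc compBr comp_id_r aphi subrr !comp0l.
clearbody e.
have [X1 [q [r [i1 [p1 [hfam1 one1 hb]]]]]] := split_summand (cat_additive C) k hfam one.
have [_ _ _ _ ip] := hb.
have sect : (a ** i1) ** (p1 - p1 ** e ** p k) = a.
  have i1p1 : i1 ** p1 = idm X0 - i k ** p k by rewrite -ip addrK.
  rewrite -comp_assoc compBr (comp_assoc i1 (p1 ** e)) (comp_assoc i1 p1 e) i1p1.
  rewrite compBl comp_id_l compBl -(comp_assoc (i k) (p k) e) p_e comp_id_r.
  by rewrite opprB -addrA addKr compBr comp_id_r comp_assoc a_e comp0l subr0.
exists X1, _, q, r, (a ** i1); split=> //; split; first exact: (hsum hb XX0).1.
move=> Y' g XY'; have [h hg] := a_univ Y' g XY'.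
by exists ((p1 - p1 ** e ** p k) ** h); rewrite comp_assoc sect.
Qed.

Hypothesis hKS : KrullSchmidt C.

Lemma left_minimal_approx_exists :
  covariantly_finite X -> forall A : C,
  exists (X0 : C) (a : Mor A X0), left_approx X a /\ left_minimal a.
Proof.
move=> hcov A; have [X0 [a ha]] := hcov A.
have [n [L [i [p [loc pi orth one]]]]] := hKS X0.
have hfam : local_family i p by [].
clear loc pi orth.
elim: n X0 L i p a ha hfam one => [|n IH] X0 L i p a ha hfam one.
  have [amin|] := classic (left_minimal a); first by exists X0, a.
  move=> /not_forall_implies [phi _ nphi].
  by have [[]] := nonIso_component hfam one nphi.
have [amin|] := classic (left_minimal a); first by exists X0, a.
move=> /not_forall_implies [phi phia nphi].
have [X1 [L1 [q [r [a1 [hfam1 one1 ha1]]]]]] :=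
  left_approx_drop_summand hfam one ha phia nphi.
exact: IH ha1 hfam1 one1.
Qed.

Lemma right_minimal_approx_exists :
  contravariantly_finite X -> forall B : C,
  exists (X0 : C) (a : Mor X0 B), right_approx X a /\ right_minimal a.
Proof.
move=> hcon B; have [X0 [a ha]] := hcon B.
have [n [L [i [p [loc pi orth one]]]]] := hKS X0.
have hfam : local_family i p by [].
clear loc pi orth.
elim: n X0 L i p a ha hfam one => [|n IH] X0 L i p a ha hfam one.
  have [amin|] := classic (right_minimal a); first by exists X0, a.
  move=> /not_forall_implies [phi _ nphi].
  by have [[]] := nonIso_component hfam one nphi.
have [amin|] := classic (right_minimal a); first by exists X0, a.
move=> /not_forall_implies [phi aphi nphi].
have [X1 [L1 [q [r [a1 [hfam1 one1 ha1]]]]]] :=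
  right_approx_drop_summand hfam one ha aphi nphi.
exact: IH ha1 hfam1 one1.
Qed.

End MinimalApproximations.

Section Conflations.
Variable C : ExtriCat.
Implicit Types A B K T W Z : C.

Lemma pushE0 A A' Z (a : Mor A A') : pushE a (0 : E Z A) = 0.
Proof. by apply: (addrI (pushE a (0 : E Z A))); rewrite -pushE_add !addr0. Qed.

Lemma pullE0 A Z Z' (c : Mor Z' Z) : pullE c (0 : E Z A) = 0.
Proof. by apply: (addrI (pullE c (0 : E Z A))); rewrite -pullE_add !addr0. Qed.

Lemma real_lift K W Z T (d : E Z K) (u : Mor K W) (v : Mor W Z) (g : Mor T Z) :
  real d u v -> pullE g d = 0 -> exists t : Mor T W, v ** t = g.
Proof.
move=> duv gd0; have [S [i1 [i2 [p1 [p2 hb]]]]] := (cat_additive C).2 K T.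
have gd : pushE (idm K) 0 = pullE g d by rewrite pushE_id gd0.
have [b [_ b_p2]] := real_morph (real_zero hb) duv gd.
exists (b ** i2); rewrite comp_assoc b_p2 -comp_assoc.
by case: hb => _ -> _ _ _; rewrite comp_id_r.
Qed.

Lemma real_extend K W Z T (d : E Z K) (u : Mor K W) (v : Mor W Z) (g : Mor K T) :
  real d u v -> pushE g d = 0 -> exists t : Mor W T, t ** u = g.
Proof.
move=> duv gd0; have [S [i1 [i2 [p1 [p2 hb]]]]] := (cat_additive C).2 T Z.
have gd : pushE g d = pullE (idm Z) 0 by rewrite gd0 pullE_id.
have [b [b_u _]] := real_morph duv (real_zero hb) gd.
exists (p1 ** b); rewrite -comp_assoc b_u comp_assoc.
by case: hb => -> _ _ _ _; rewrite comp_id_l.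
Qed.

Lemma pushE_real A B Z (d : E Z A) (x : Mor A B) (y : Mor B Z) :
  real d x y -> pushE x d = 0.
Proof.
move=> dxy; have [S [i1 [i2 [p1 [p2 hb]]]]] := (cat_additive C).2 B Z.
have [c [_ ->]] := ET3 (a := x) (b := i1) dxy (real_zero hb) erefl.
exact: pullE0.
Qed.

Lemma pullE_real A B Z (d : E Z A) (x : Mor A B) (y : Mor B Z) :
  real d x y -> pullE y d = 0.
Proof.
move=> dxy; have [S [i1 [i2 [p1 [p2 hb]]]]] := (cat_additive C).2 A B.
have [a [_ <-]] := ET3op (b := p2) (c := y) (real_zero hb) dxy erefl.
exact: pushE0.
Qed.

Lemma real0_retraction A B Z (x : Mor A B) (y : Mor B Z) :
  real (0 : E Z A) x y -> exists r : Mor B A, r ** x = idm A.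
Proof.
move=> dxy; have [S [i1 [i2 [p1 [p2 hb]]]]] := (cat_additive C).2 A Z.
have [b [[b' [b'b _]] [bi1 _]]] := (real_equiv x y (real_zero hb)).1 dxy.
exists (p1 ** b'); rewrite -bi1 -comp_assoc (comp_assoc b') b'b comp_id_l.
by case: hb.
Qed.

Lemma real0_section A B Z (x : Mor A B) (y : Mor B Z) :
  real (0 : E Z A) x y -> exists s : Mor Z B, y ** s = idm Z.
Proof.
move=> dxy; have [S [i1 [i2 [p1 [p2 hb]]]]] := (cat_additive C).2 A Z.
have [b [_ [_ yb]]] := (real_equiv x y (real_zero hb)).1 dxy.
by exists (b ** i2); rewrite comp_assoc yb; case: hb.
Qed.

Lemma pullE_exact A B Z T (d : E Z A) (x : Mor A B) (y : Mor B Z) (e : E B T) :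
  real d x y -> pullE x e = 0 -> exists e' : E Z T, e = pullE y e'.
Proof.
move=> dxy xe0; have [W [u [v euv]]] := real_ex e.
have [Z' [d'' [_ [_ [s [r [_ _ sr _ rd]]]]]]] := ET4op dxy euv.
rewrite xe0 in sr; have [t ts] := real0_retraction sr.
by exists (pushE t d''); rewrite -push_pullE rd -pushE_comp ts pushE_id.
Qed.

Lemma pushE_exact A B Z T (d : E Z A) (x : Mor A B) (y : Mor B Z) (e : E T B) :
  real d x y -> pushE y e = 0 -> exists e' : E T A, e = pushE x e'.
Proof.
move=> dxy ye0; have [W [u [v euv]]] := real_ex e.
have [Z' [d'' [_ [_ [s [r [_ _ sr _ rd]]]]]]] := ET4 dxy euv.
rewrite ye0 in sr; have [t rt] := real0_section sr.
by exists (pullE t d''); rewrite push_pullE rd -pullE_comp rt pullE_id.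
Qed.

Lemma pullE_exact_conn A B Z T (d : E Z A) (x : Mor A B) (y : Mor B Z) (e : E Z T) :
  real d x y -> pullE y e = 0 -> exists w : Mor A T, e = pushE w d.
Proof.
move=> dxy ye0; have [W [u [v euv]]] := real_ex e.
have [t vt] := real_lift euv ye0.
have vt' : v ** t = idm Z ** y by rewrite vt comp_id_l.
have [w [_ wd]] := ET3op dxy euv vt'.
by exists w; rewrite wd pullE_id.
Qed.

Lemma pushE_exact_conn A B Z T (d : E Z A) (x : Mor A B) (y : Mor B Z) (e : E T A) :
  real d x y -> pushE x e = 0 -> exists w : Mor T Z, e = pullE w d.
Proof.
move=> dxy xe0; have [W [u [v euv]]] := real_ex e.
have [t tu] := real_extend euv xe0.
have tu' : t ** u = x ** idm A by rewrite tu comp_id_r.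
have [w [_ wd]] := ET3 euv dxy tu'.
by exists w; rewrite -wd pushE_id.
Qed.

End Conflations.

Section Wakamatsu.
Variable C : ExtriCat.
Variable X : C -> Prop.
Hypothesis hext : ext_closed X.

Lemma wakamatsu_left (A P Z X0 Y0 : C) (d : E Z A) (x : Mor A P) (y : Mor P Z)
    (a : Mor A X0) (x' : Mor X0 Y0) (y' : Mor Y0 Z) :
  real d x y -> projective P -> left_approx X a -> left_minimal a ->
  real (pushE a d) x' y' -> perpL X Y0.
Proof.
move=> dxy projP [XX0 a_univ] amin d'xy X' e XX'.
have [b [bx _]] := real_morph (a := a) (c := idm Z) dxy d'xy (esym (pullE_id _)).
(* x'^* e is realised by a conflation ending in X0 that splits by minimality. *)
have x'e0 : pullE x' e = 0.
  have [W [u [v euv]]] := real_ex (pullE x' e).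
  have [t vt] : exists t : Mor A W, v ** t = a.
    apply: (real_lift euv).
    by rewrite -pullE_comp -bx pullE_comp (projP _ (pullE b e)) pullE0.
  have [h ht] := a_univ W t (hext euv XX' XX0).
  have [z [_ vhz]] : isIso (v ** h) by apply: amin; rewrite -comp_assoc ht vt.
  by rewrite -[pullE x' e]pullE_id -vhz !pullE_comp (pullE_real euv) !pullE0.
have [e' ->] := pullE_exact d'xy x'e0.
have [w ->] := pullE_exact_conn dxy (projP _ (pullE y e')).
have [k <-] := a_univ X' w XX'.
by rewrite pushE_comp -push_pullE (pullE_real d'xy) pushE0.
Qed.

Lemma wakamatsu_right (Z I B Y0 X0 : C) (d : E B Z) (x : Mor Z I) (y : Mor I B)
    (a : Mor Y0 B) (x' : Mor Z X0) (y' : Mor X0 Y0) :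
  real d x y -> Defs.injective I -> right_approx X a -> right_minimal a ->
  real (pullE a d) x' y' -> perpR X X0.
Proof.
move=> dxy injI [XY0 a_univ] amin d'xy X' e XX'.
have [b [_ yb]] := real_morph (a := idm Z) (c := a) d'xy dxy (pushE_id _).
have y'e0 : pushE y' e = 0.
  have [W [u [v euv]]] := real_ex (pushE y' e).
  have [t tu] : exists t : Mor W B, t ** u = a.
    apply: (real_extend euv).
    by rewrite -pushE_comp -yb pushE_comp (injI _ (pushE b e)) pushE0.
  have [h ht] := a_univ W t (hext euv XY0 XX').
  have [z [hu_z _]] : isIso (h ** u) by apply: amin; rewrite comp_assoc ht tu.
  by rewrite -[pushE y' e]pushE_id -hu_z !pushE_comp (pushE_real euv) !pushE0.
have [e' ->] := pushE_exact d'xy y'e0.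
have [w ->] := pushE_exact_conn dxy (injI _ (pushE x e')).
have [k <-] := a_univ X' w XX'.
by rewrite pullE_comp push_pullE (pushE_real d'xy) pullE0.
Qed.

Lemma real_right_approx_perpL (X0 Y0 Z : C) (d : E Z X0) (x : Mor X0 Y0)
    (y : Mor Y0 Z) :
  real d x y -> X X0 -> perpL X Y0 -> right_approx (perpL X) y.
Proof.
by move=> dxy XX0 perpY0; split=> // Y' g perpY'; apply: (real_lift dxy); apply: perpY'.
Qed.

Lemma real_left_approx_perpR (X0 Y0 Z : C) (d : E Y0 Z) (x : Mor Z X0)
    (y : Mor X0 Y0) :
  real d x y -> X Y0 -> perpR X X0 -> left_approx (perpR X) x.
Proof.
by move=> dxy XY0 perpX0; split=> // X' g perpX'; apply: (real_extend dxy); apply: perpX'.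
Qed.

End Wakamatsu.

Theorem corollary3p3 (C : ExtriCat) :
  KrullSchmidt C -> enough_projectives C -> enough_injectives C ->
  (forall X : C -> Prop,
     subcategory X -> covariantly_finite X -> ext_closed X -> summand_closed X ->
     forall Cc : C, exists (X0 Y0 : C) (d : E Cc X0) (x : Mor X0 Y0) (y : Mor Y0 Cc),
       [/\ real d x y, X X0, perpL X Y0 & right_approx (perpL X) y])
  /\
  (forall Y : C -> Prop,
     subcategory Y -> contravariantly_finite Y -> ext_closed Y -> summand_closed Y ->
     forall Cc : C, exists (X0 Y0 : C) (d : E Y0 Cc) (x : Mor Cc X0) (y : Mor X0 Y0),
       [/\ real d x y, perpR Y X0, Y Y0 & left_approx (perpR Y) x]).
Proof.
move=> hKS hproj hinj; split.
- move=> X _ hcov hext hsum Z.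
  have [A [P [d [x [y [dxy projP]]]]]] := hproj Z.
  have [X0 [a [ha amin]]] := left_minimal_approx_exists hsum hKS hcov A.
  have [Y0 [x' [y' d'xy]]] := real_ex (pushE a d).
  have perpY0 := wakamatsu_left hext dxy projP ha amin d'xy.
  exists X0, Y0, (pushE a d), x', y'; split=> //; first exact: ha.1.
  exact: real_right_approx_perpL d'xy ha.1 perpY0.
- move=> Y _ hcon hext hsum Z.
  have [I [B [d [x [y [dxy injI]]]]]] := hinj Z.
  have [Y0 [a [ha amin]]] := right_minimal_approx_exists hsum hKS hcon B.
  have [X0 [x' [y' d'xy]]] := real_ex (pullE a d).
  have perpX0 := wakamatsu_right hext dxy injI ha amin d'xy.
  exists X0, Y0, (pullE a d), x', y'; split=> //; first exact: ha.1.
  exact: real_left_approx_perpR d'xy ha.1 perpX0.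
Qed.
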